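(* The following subgroups of $\mathrm{Homeo}(\{0,1\}^{\mathbb N})$ are all equal: $\widehat S=\langle {}_yG_y,T\rangle=\langle G_y,T\rangle=\langle {}_yG,T\rangle=\langle G,T\rangle=\langle y_{10},T\rangle$.
   Context: Let $\{0,1\}^{\mathbb N}$ be the Cantor set of infinite binary sequences and $\{0,1\}^{<\mathbb N}$ the set of finite binary words, including the empty word; juxtaposition denotes concatenation, $0^n,1^n$ ($n\ge0$) denote constant words. Homeomorphisms act on the right. Define $x,y$ by $00\eta\cdot x=0\eta$, $01\eta\cdot x=10\eta$, $1\eta\cdot x=11\eta$, and recursively $00\eta\cdot y=0(\eta\cdot y)$, $01\eta\cdot y=10(\eta\cdot y^{-1})$, $1\eta\cdot y=11(\eta\cdot y)$; $x_s$ (resp. $y_s$) sends $s\eta\mapsto s(\eta\cdot x)$ (resp. $s(\eta\cdot y)$) and fixes sequences not beginning with $s$. $F=\langle x_s\rangle$; ${}_yG_y=\langle F,\ y_s\ (\text{all } s)\rangle$; $G_y=\langle F,\ y_s\ (s\ne0^n)\rangle$; ${}_yG=\langle F,\ y_s\ (s\ne 1^n)\rangle$; $G=\langle F,\ y_s\ (s\notin\{0^n,1^n\})\rangle$. For $n\ge0$, $p_n$ is the homeomorphism with $1^k0\eta\cdot p_n=1^{k+1}0\eta$ for $0\le k\le n-1$, $1^n0\eta\cdot p_n=1^{n+1}\eta$, $1^{n+1}\eta\cdot p_n=0\eta$; $T=\langle F,p_n\ (n\ge0)\rangle$. $\widehat S$ denotes the group generated by all $x_s,y_s,p_n$. *)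

From mathcomp Require Import all_boot.
Set Implicit Arguments. Unset Strict Implicit. Unset Printing Implicit Defensive.

(** The Cantor set {0,1}^N; false = 0, true = 1.  Finite words are [seq bool]. *)
Definition Cantor := nat -> bool.

Definition prepend (w : seq bool) (xi : Cantor) : Cantor :=
  fun n => if n < size w then nth false w n else xi (n - size w).

Definition shift (k : nat) (xi : Cantor) : Cantor := fun n => xi (k + n).

Definition has_prefix (w : seq bool) (xi : Cantor) : bool := mkseq xi (size w) == w.

Definition x_map (xi : Cantor) : Cantor :=
  if xi 0 then prepend [:: true; true] (shift 1 xi)
  else if xi 1 then prepend [:: true; false] (shift 2 xi)
  else prepend [:: false] (shift 2 xi).

(** The recursive definition of y (and y^{-1}) as a two-state transducer:
    state true = y, state false = y^{-1}.  One step returns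
    (emitted word, next state, number of letters consumed).
    y    : 00η ↦ 0(η·y),     01η ↦ 10(η·y^{-1}),  1η ↦ 11(η·y)
    y^-1 : 0η ↦ 00(η·y^-1),  10η ↦ 01(η·y),      11η ↦ 1(η·y^-1) *)
Definition ystep (st : bool) (xi : Cantor) : seq bool * bool * nat :=
  if st then
    (if xi 0 then ([:: true; true], true, 1)
     else if xi 1 then ([:: true; false], false, 2)
     else ([:: false], true, 2))
  else
    (if xi 0 then
       (if xi 1 then ([:: true], false, 2) else ([:: false; true], true, 2))
     else ([:: false; false], false, 1)).

(** k steps of the transducer; emits at least k letters *)
Fixpoint yrun (k : nat) (st : bool) (xi : Cantor) : seq bool :=
  match k with
  | 0 => [::]
  | k'.+1 => let '(w, st', c) := ystep st xi in w ++ yrun k' st' (shift c xi)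
  end.

(** the n-th letter of xi·y is determined after n+1 steps *)
Definition y_map (xi : Cantor) : Cantor := fun n => nth false (yrun n.+1 true xi) n.

Definition localize (s : seq bool) (g : Cantor -> Cantor) (xi : Cantor) : Cantor :=
  if has_prefix s xi then prepend s (g (shift (size s) xi)) else xi.

Definition x_ (s : seq bool) : Cantor -> Cantor := localize s x_map.
Definition y_ (s : seq bool) : Cantor -> Cantor := localize s y_map.

Fixpoint lead_ones (m : nat) (xi : Cantor) : nat :=
  match m with
  | 0 => 0
  | m'.+1 => if xi 0 then (lead_ones m' (shift 1 xi)).+1 else 0
  end.

(** p_n : 1^k0η ↦ 1^{k+1}0η (k<n), 1^n0η ↦ 1^{n+1}η, 1^{n+1}η ↦ 0η *)
Definition p_ (n : nat) (xi : Cantor) : Cantor :=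
  let k := lead_ones n.+1 xi in
  if k == n.+1 then prepend [:: false] (shift n.+1 xi)
  else if k < n then prepend [:: true] xi
  else prepend (nseq n.+1 true) (shift n.+1 xi).

(** The subgroup generated by a set S of homeomorphisms (acting on the right:
    ξ·(fg) = (ξ·f)·g).  Closed under identity, products and inverses. *)
Inductive Gen (S : (Cantor -> Cantor) -> Prop) : (Cantor -> Cantor) -> Prop :=
| Gen_id : Gen S (fun xi => xi)
| Gen_base f : S f -> Gen S f
| Gen_mul f g : Gen S f -> Gen S g -> Gen S (fun xi => g (f xi))
| Gen_inv f h : Gen S f -> (forall xi, f (h xi) = xi) ->
                (forall xi, h (f xi) = xi) -> Gen S h.

Definition union (A B : (Cantor -> Cantor) -> Prop) : (Cantor -> Cantor) -> Prop :=
  fun f => A f \/ B f.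

Definition F_gens f := exists s, f = x_ s.
Definition p_gens f := exists n, f = p_ n.

Definition Shat := Gen (fun f => F_gens f \/ (exists s, f = y_ s) \/ p_gens f).
Definition Tgrp := Gen (union F_gens p_gens).
Definition yGy := Gen (union F_gens (fun f => exists s, f = y_ s)).
(* G_y : y_s for s <> 0^n, i.e. s contains a 1 *)
Definition Gy := Gen (union F_gens (fun f => exists s, true \in s /\ f = y_ s)).
(* _yG : y_s for s <> 1^n, i.e. s contains a 0 *)
Definition yG := Gen (union F_gens (fun f => exists s, false \in s /\ f = y_ s)).
(* G : y_s for s not in {0^n, 1^n} *)
Definition Gplain :=
  Gen (union F_gens (fun f => exists s, true \in s /\ false \in s /\ f = y_ s)).

Definition join (H K : (Cantor -> Cantor) -> Prop) := Gen (union H K).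

(** Let [H = ⟨K, T⟩] where [K] is any of the listed groups; each contains [y_10]
    and is contained in [Ŝ].  So [H ⊆ Ŝ], and it suffices to show that a group
    containing all [x_s], [p_0] and [y_10] contains every [y_s].

    - A homeomorphism [g] of the group that replaces a prefix [a] by a prefix [b]
      conjugates [y_a] to [y_b] ([transports_localize]).  Such "transports" form
      an equivalence relation on words.
    - The clauses of [x] (applied locally as [x_s]) and of [p_0] yield the moves
      s00 ~ s0, s01 ~ s10, s1 ~ s11 and 0 ~ 1; by induction on length every
      nonempty word is equivalent to 0, hence to 10, giving [y_t] for [t ≠ ∅].
    - The remaining copy [y = y_∅] factors as [x · y_0 · (y_10)^-1 · y_11]. *)

From mathcomp Require Import all_boot zify.
From Stdlib Require Import FunctionalExtensionality.
Set Implicit Arguments. Unset Strict Implicit. Unset Printing Implicit Defensive.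

Lemma prepend_nil (e : Cantor) : prepend [::] e = e.
Proof. by apply: functional_extensionality => n; rewrite /prepend subn0. Qed.

Lemma prepend_cat a b (e : Cantor) : prepend (a ++ b) e = prepend a (prepend b e).
Proof.
apply: functional_extensionality => n.
rewrite /prepend size_cat nth_cat subnDA.
case: (ltnP n (size a)) => Ha; first by have -> : n < size a + size b by lia.
by case: (ltnP n (size a + size b)) => Hab; [have -> : n - size a < size b by lia
  | have -> : (n - size a < size b) = false by lia].
Qed.

Lemma shift_prepend w (e : Cantor) : shift (size w) (prepend w e) = e.
Proof.
apply: functional_extensionality => n.
by rewrite /shift /prepend ltnNge leq_addr /= addKn.
Qed.

Lemma has_prefix_prepend w (e : Cantor) : has_prefix w (prepend w e).
Proof.
apply/eqP/(@eq_from_nth _ false); rewrite size_mkseq // => i lt_i.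
by rewrite nth_mkseq // /prepend lt_i.
Qed.

Lemma prefix_split w (xi : Cantor) : has_prefix w xi -> xi = prepend w (shift (size w) xi).
Proof.
move/eqP=> Hw; apply: functional_extensionality => n; rewrite /prepend.
by case: ltnP => Hn; [rewrite -Hw nth_mkseq | rewrite /shift subnKC].
Qed.

Lemma localize_prepend s g (e : Cantor) : localize s g (prepend s e) = prepend s (g e).
Proof. by rewrite /localize has_prefix_prepend shift_prepend. Qed.

Lemma localize_out s g (xi : Cantor) : ~~ has_prefix s xi -> localize s g xi = xi.
Proof. by rewrite /localize => /negbTE ->. Qed.

Lemma localize_nil g : localize [::] g = g.
Proof. by apply: functional_extensionality => xi; rewrite /localize prepend_nil. Qed.

Lemma localize_cancel s f g : (forall xi, f (g xi) = xi) ->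
  forall xi, localize s f (localize s g xi) = xi.
Proof.
move=> fK xi; have [/prefix_split ->|out_s] := boolP (has_prefix s xi).
  by rewrite !localize_prepend fK.
by rewrite !localize_out.
Qed.

(** Every sequence lies in the cylinders 00, 01, 1 (the domain partition of
    [x] and [y]) and in 0, 10, 11 (their range partition). *)
Lemma split_first (xi : Cantor) : xi = prepend [:: xi 0] (shift 1 xi).
Proof. by apply: (@prefix_split (mkseq xi 1)); rewrite /has_prefix size_mkseq. Qed.

Lemma split_first2 (xi : Cantor) : xi = prepend [:: xi 0; xi 1] (shift 2 xi).
Proof. by apply: (@prefix_split (mkseq xi 2)); rewrite /has_prefix size_mkseq. Qed.

Lemma cases_00_01_1 (xi : Cantor) : exists e,
  [\/ xi = prepend [:: false; false] e, xi = prepend [:: false; true] e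
    | xi = prepend [:: true] e].
Proof.
case E0: (xi 0); first by exists (shift 1 xi); apply: Or33; rewrite {1}(split_first xi) E0.
by exists (shift 2 xi); case E1: (xi 1); [apply: Or32 | apply: Or31];
  rewrite {1}(split_first2 xi) E0 E1.
Qed.

Lemma cases_0_10_11 (xi : Cantor) : exists e,
  [\/ xi = prepend [:: false] e, xi = prepend [:: true; false] e
    | xi = prepend [:: true; true] e].
Proof.
case E0: (xi 0); last by exists (shift 1 xi); apply: Or31; rewrite {1}(split_first xi) E0.
by exists (shift 2 xi); case E1: (xi 1); [apply: Or33 | apply: Or32];
  rewrite {1}(split_first2 xi) E0 E1.
Qed.

Lemma x_00 (e : Cantor) : x_map (prepend [:: false; false] e) = prepend [:: false] e.
Proof. by rewrite /x_map /= (shift_prepend [:: false; false]). Qed.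
Lemma x_01 (e : Cantor) : x_map (prepend [:: false; true] e) = prepend [:: true; false] e.
Proof. by rewrite /x_map /= (shift_prepend [:: false; true]). Qed.
Lemma x_1 (e : Cantor) : x_map (prepend [:: true] e) = prepend [:: true; true] e.
Proof. by rewrite /x_map /= (shift_prepend [:: true]). Qed.

Definition x_inv (xi : Cantor) : Cantor :=
  if xi 0 then (if xi 1 then prepend [:: true] (shift 2 xi)
                else prepend [:: false; true] (shift 2 xi))
  else prepend [:: false; false] (shift 1 xi).

Lemma x_invK xi : x_inv (x_map xi) = xi.
Proof.
have [e [] ->] := cases_00_01_1 xi; rewrite ?x_00 ?x_01 ?x_1 /x_inv /=;
  by rewrite ?(shift_prepend [:: false]) ?(shift_prepend [:: true; false])
             ?(shift_prepend [:: true; true]).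
Qed.

Lemma x_mapK xi : x_map (x_inv xi) = xi.
Proof.
have [e [] ->] := cases_0_10_11 xi; rewrite /x_inv /=
  ?(shift_prepend [:: false]) ?(shift_prepend [:: true; false])
  ?(shift_prepend [:: true; true]); by rewrite ?x_00 ?x_01 ?x_1.
Qed.

Lemma p0_flip b (e : Cantor) : p_ 0 (prepend [:: b] e) = prepend [:: ~~ b] e.
Proof. by case: b; rewrite /p_ /= (shift_prepend [:: _]). Qed.

Lemma p0K xi : p_ 0 (p_ 0 xi) = xi.
Proof. by rewrite (split_first xi) !p0_flip negbK. Qed.

Definition ymap (st : bool) (xi : Cantor) : Cantor :=
  fun n => nth false (yrun n.+1 st xi) n.

Lemma y_map_ymap : y_map = ymap true.
Proof. by []. Qed.

Lemma ystep_nonempty st xi : 0 < size (ystep st xi).1.1.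
Proof. by rewrite /ystep; case: st; case: (xi 0); case: (xi 1). Qed.

Lemma yrun_size k st xi : k <= size (yrun k st xi).
Proof.
elim: k st xi => // k IH st xi /=; have := ystep_nonempty st xi.
case: (ystep st xi) => [[w st'] c] /= w_gt0.
by rewrite size_cat; have := IH st' (shift c xi); lia.
Qed.

Lemma yrun_prefix d k st xi : exists r, yrun (k + d) st xi = yrun k st xi ++ r.
Proof.
elim: k st xi => [|k IH] st xi; first by exists (yrun d st xi).
rewrite addSn /=; case: (ystep st xi) => [[w st'] c].
by have [r ->] := IH st' (shift c xi); exists r; rewrite catA.
Qed.

Lemma ymap_step st xi : ymap st xi =
  prepend (ystep st xi).1.1 (ymap (ystep st xi).1.2 (shift (ystep st xi).2 xi)).
Proof.
apply: functional_extensionality => n; have := ystep_nonempty st xi.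
rewrite /ymap /=; case: (ystep st xi) => [[w st'] c] /= w_gt0.
rewrite nth_cat /prepend; case: ltnP => // le_w_n; set j := n - size w.
have [r Hr] := yrun_prefix (n - j.+1) j.+1 st' (shift c xi).
have E : j.+1 + (n - j.+1) = n by rewrite /j; lia.
rewrite E in Hr; rewrite Hr nth_cat; have := yrun_size j.+1 st' (shift c xi).
by case: ltnP => //; lia.
Qed.

Lemma y_00 (e : Cantor) :
  ymap true (prepend [:: false; false] e) = prepend [:: false] (ymap true e).
Proof. by rewrite ymap_step /= (shift_prepend [:: false; false]). Qed.
Lemma y_01 (e : Cantor) :
  ymap true (prepend [:: false; true] e) = prepend [:: true; false] (ymap false e).
Proof. by rewrite ymap_step /= (shift_prepend [:: false; true]). Qed.
Lemma y_1 (e : Cantor) :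
  ymap true (prepend [:: true] e) = prepend [:: true; true] (ymap true e).
Proof. by rewrite ymap_step /= (shift_prepend [:: true]). Qed.
Lemma yinv_0 (e : Cantor) :
  ymap false (prepend [:: false] e) = prepend [:: false; false] (ymap false e).
Proof. by rewrite ymap_step /= (shift_prepend [:: false]). Qed.
Lemma yinv_10 (e : Cantor) :
  ymap false (prepend [:: true; false] e) = prepend [:: false; true] (ymap true e).
Proof. by rewrite ymap_step /= (shift_prepend [:: true; false]). Qed.
Lemma yinv_11 (e : Cantor) :
  ymap false (prepend [:: true; true] e) = prepend [:: true] (ymap false e).
Proof. by rewrite ymap_step /= (shift_prepend [:: true; true]). Qed.

(** Prepending a nonempty word turns agreement below [n] into agreement at [n];
    this drives the induction proving that [y^-1] inverts [y]. *)
Lemma prepend_agree w (f g : Cantor) n : 0 < size w ->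
  (forall m, m < n -> f m = g m) -> prepend w f n = prepend w g n.
Proof. by move=> w_gt0 fg; rewrite /prepend; case: ltnP => // ?; apply: fg; lia. Qed.

Lemma ymap_inverse_at n xi :
  ymap false (ymap true xi) n = xi n /\ ymap true (ymap false xi) n = xi n.
Proof.
elim/ltn_ind: n xi => n IH xi; split.
- have [e [] ->] := cases_00_01_1 xi;
  rewrite ?y_00 ?y_01 ?y_1 ?yinv_0 ?yinv_10 ?yinv_11;
  by apply: prepend_agree => // m lt_mn; case: (IH m lt_mn e).
- have [e [] ->] := cases_0_10_11 xi;
  rewrite ?yinv_0 ?yinv_10 ?yinv_11 ?y_00 ?y_01 ?y_1;
  by apply: prepend_agree => // m lt_mn; case: (IH m lt_mn e).
Qed.

Lemma ymap_trueK xi : ymap false (ymap true xi) = xi.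
Proof. by apply: functional_extensionality => n; case: (ymap_inverse_at n xi). Qed.
Lemma ymap_falseK xi : ymap true (ymap false xi) = xi.
Proof. by apply: functional_extensionality => n; case: (ymap_inverse_at n xi). Qed.

Lemma Gen_mono (S S' : (Cantor -> Cantor) -> Prop) :
  (forall f, S f -> Gen S' f) -> forall f, Gen S f -> Gen S' f.
Proof.
move=> SS' f; elim=> {f} [|f /SS' //|f g _ Hf _ Hg|f h _ Hf hK fK].
- exact: Gen_id.
- exact: Gen_mul Hf Hg.
- exact: Gen_inv Hf hK fK.
Qed.

Section Transport.

Variable S : (Cantor -> Cantor) -> Prop.

Definition transports (a b : seq bool) := exists g h,
  [/\ Gen S g, Gen S h, (forall xi, g (h xi) = xi), (forall xi, h (g xi) = xi)
    & forall e, g (prepend a e) = prepend b e].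

Lemma transports_refl a : transports a a.
Proof. by exists id, id; split=> //; apply: Gen_id. Qed.

Lemma transports_sym a b : transports a b -> transports b a.
Proof.
move=> [g [h [Hg Hh gK hK gab]]]; exists h, g; split=> // e.
by rewrite -gab hK.
Qed.

Lemma transports_trans a b c : transports a b -> transports b c -> transports a c.
Proof.
move=> [g [h [Hg Hh gK hK gab]]] [g' [h' [Hg' Hh' gK' hK' gbc]]].
exists (fun xi => g' (g xi)), (fun xi => h (h' xi)).
split=> [||xi|xi|e]; [exact: Gen_mul|exact: Gen_mul|by rewrite gK gK'|by rewrite hK' hK|].
by rewrite gab gbc.
Qed.

Lemma transports_catr a b w : transports a b -> transports (a ++ w) (b ++ w).
Proof.
move=> [g [h [Hg Hh gK hK gab]]]; exists g, h; split=> // e.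
by rewrite !prepend_cat gab.
Qed.

(** Conjugation: if [g] transports [a] to [b], then [f_b = g^-1 f_a g]; hence the
    group containing [f_a] contains [f_b]. *)
Lemma transports_localize a b f :
  transports a b -> Gen S (localize a f) -> Gen S (localize b f).
Proof.
move=> [g [h [Hg Hh gK hK gab]]] Hf.
have hba e : h (prepend b e) = prepend a e by rewrite -gab hK.
have -> : localize b f = fun xi => g (localize a f (h xi)).
  apply: functional_extensionality => xi.
  have [/prefix_split ->|out_b] := boolP (has_prefix b xi).
    by rewrite hba !localize_prepend gab.
  have [in_a|out_a] := boolP (has_prefix a (h xi)); last by rewrite !localize_out ?gK.
  by move: out_b; rewrite -(gK xi) (prefix_split in_a) gab has_prefix_prepend.
exact: Gen_mul (Gen_mul Hh Hf) Hg.
Qed.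

Lemma Gen_localize_inv s f f' : Gen S (localize s f) ->
  (forall xi, f (f' xi) = xi) -> (forall xi, f' (f xi) = xi) ->
  Gen S (localize s f').
Proof. by move=> Hf fK f'K; apply: (Gen_inv Hf); apply: localize_cancel. Qed.

End Transport.

Section Moves.

Variable S : (Cantor -> Cantor) -> Prop.
Hypothesis x_in : forall s, Gen S (x_ s).
Hypothesis p0_in : Gen S (p_ 0).

Lemma transports_x s a b : (forall e, x_map (prepend a e) = prepend b e) ->
  transports S (s ++ a) (s ++ b).
Proof.
move=> xab; exists (x_ s), (localize s x_inv).
split=> [||xi|xi|e].
- exact: x_in.
- exact: Gen_localize_inv (x_in s) x_mapK x_invK.
- exact: (localize_cancel _ x_mapK).
- exact: (localize_cancel _ x_invK).
- by rewrite !prepend_cat /x_ localize_prepend xab.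
Qed.

Lemma move_00 s : transports S (s ++ [:: false; false]) (s ++ [:: false]).
Proof. exact: transports_x x_00. Qed.
Lemma move_01 s : transports S (s ++ [:: false; true]) (s ++ [:: true; false]).
Proof. exact: transports_x x_01. Qed.
Lemma move_1 s : transports S (s ++ [:: true]) (s ++ [:: true; true]).
Proof. exact: transports_x x_1. Qed.
Lemma move_first : transports S [:: true] [:: false].
Proof. by exists (p_ 0), (p_ 0); split=> // [xi|xi|e]; rewrite ?p0K ?p0_flip. Qed.

(** Every nonempty word is transported to the word 0 (induction on length: the
    moves shorten any word of length at least 2, or bring it to the form u10,
    which in turn reduces to a shorter word). *)
Lemma transports_to_0 t : t != [::] -> transports S t [:: false].
Proof.
have [n] := ubnP (size t); elim: n t => // n IH t.
case/lastP: t => [|u c] // size_t _.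
have IHs v : size v < size (rcons u c) -> v != [::] -> transports S v [:: false].
  by move=> lt_v ?; apply: IH => //; lia.
case/lastP: u size_t IHs => [|v b] _ IHs.
  by clear IHs; case: c; [exact: move_first | exact: transports_refl].
have t10 : transports S (v ++ [:: true; false]) [:: false].
  case/lastP: v IHs => [|u a] IHs.
    exact: transports_trans (transports_catr [:: false] move_first) (move_00 [::]).
  have IHu : transports S (u ++ [:: true; false]) [:: false].
    by apply: IHs; [rewrite size_cat !size_rcons addn2 | case: u].
  clear IHs; rewrite -cats1 -catA /=; case: a.
    have := transports_catr [:: false] (move_1 u); rewrite -!catA /=.
    by move/transports_sym/transports_trans; apply.
  have := transports_catr [:: false] (move_01 u); rewrite -!catA /=.
  move/transports_trans; apply; have := move_00 (u ++ [:: true]); rewrite -!catA /=.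
  by move/transports_trans; apply.
have IHv a : transports S (v ++ [:: a]) [:: false].
  by apply: IHs; [rewrite size_cat !size_rcons addn1 | case: v {t10}].
clear IHs; rewrite -!cats1 -catA /=; case: b; case: c => //.
- exact: transports_trans (transports_sym (move_1 v)) (IHv true).
- exact: transports_trans (move_01 v) t10.
- exact: transports_trans (move_00 v) (IHv false).
Qed.

Lemma y_nonempty_words t : Gen S (y_ [:: true; false]) -> t != [::] -> Gen S (y_ t).
Proof.
move=> y10_in t_nonempty; apply: transports_localize y10_in.
exact: transports_trans (@transports_to_0 [:: true; false] isT)
  (transports_sym (transports_to_0 t_nonempty)).
Qed.

Lemma y_nil_factor : y_ [::] = fun xi =>
  y_ [:: true; true] (localize [:: true; false] (ymap false) (y_ [:: false] (x_ [::] xi))).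
Proof.
apply: functional_extensionality => xi.
rewrite /y_ /x_ !localize_nil y_map_ymap.
have [e [] ->] := cases_00_01_1 xi; rewrite ?x_00 ?x_01 ?x_1 ?y_00 ?y_01 ?y_1.
- by rewrite localize_prepend !localize_out.
- by rewrite localize_out // localize_prepend.
- by rewrite (@localize_out [:: false]) // (@localize_out [:: true; false]) // localize_prepend.
Qed.

Lemma y_all_words : Gen S (y_ [:: true; false]) -> forall s, Gen S (y_ s).
Proof.
move=> y10_in [|b s]; last exact: y_nonempty_words.
have y_in t : t != [::] -> Gen S (y_ t) by exact: y_nonempty_words.
have y10_inv_in := Gen_localize_inv y10_in ymap_falseK ymap_trueK.
rewrite y_nil_factor.
exact: Gen_mul (Gen_mul (Gen_mul (x_in [::]) (y_in [:: false] isT)) y10_inv_in)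
  (y_in [:: true; true] isT).
Qed.

End Moves.

Lemma Shat_sub_join K : K (y_ [:: true; false]) -> forall f, Shat f -> join K Tgrp f.
Proof.
move=> K_y10; have T_in f : Tgrp f -> join K Tgrp f by move=> Tf; apply: Gen_base; right.
have x_in s : join K Tgrp (x_ s) by apply/T_in/Gen_base; left; exists s.
have p_in n : join K Tgrp (p_ n) by apply/T_in/Gen_base; right; exists n.
have y_in := y_all_words x_in (p_in 0) (Gen_base (or_introl K_y10)).
by apply: Gen_mono => _ [[s ->]|[[s ->]|[n ->]]]; [apply: x_in | apply: y_in | apply: p_in].
Qed.

Lemma Tgrp_sub_Shat f : Tgrp f -> Shat f.
Proof. by apply: Gen_mono => g [Fg|pg]; apply: Gen_base; [left | right; right]. Qed.

Lemma yGroup_sub_Shat P : (forall f, P f -> exists s, f = y_ s) ->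
  forall f, Gen (union F_gens P) f -> Shat f.
Proof. by move=> Py; apply: Gen_mono => g [Fg|/Py yg]; apply: Gen_base; [left | right; left]. Qed.

Lemma Shat_eq_join K : K (y_ [:: true; false]) -> (forall f, K f -> Shat f) ->
  forall f, Shat f <-> join K Tgrp f.
Proof.
move=> K_y10 K_Shat f; split; first exact: Shat_sub_join.
by apply: Gen_mono => g [/K_Shat|/Tgrp_sub_Shat].
Qed.

Theorem lemma6p1 :
  (forall f, Shat f <-> join yGy Tgrp f) /\
  (forall f, Shat f <-> join Gy Tgrp f) /\
  (forall f, Shat f <-> join yG Tgrp f) /\
  (forall f, Shat f <-> join Gplain Tgrp f) /\
  (forall f, Shat f <-> join (fun g => g = y_ [:: true; false]) Tgrp f).
Proof.
split; [|split; [|split; [|split]]]; apply: Shat_eq_join.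
- by apply: Gen_base; right; exists [:: true; false].
- exact: yGroup_sub_Shat.
- by apply: Gen_base; right; exists [:: true; false].
- by apply: yGroup_sub_Shat => g [s [_ ->]]; exists s.
- by apply: Gen_base; right; exists [:: true; false].
- by apply: yGroup_sub_Shat => g [s [_ ->]]; exists s.
- by apply: Gen_base; right; exists [:: true; false].
- by apply: yGroup_sub_Shat => g [s [_ [_ ->]]]; exists s.
- by [].
- by move=> g ->; apply: Gen_base; right; left; exists [:: true; false].
Qed.
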